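(* Let $f_1,\dots,f_n$ be monotone linear functions and $\sigma$ a permutation of $[n]$. Then $f^\sigma<\min\{f^{\sigma_1},f^{\sigma_{n-1}}\}\ \Rightarrow\ \theta(f^\sigma)+\pi\in(\theta(f_{\sigma(n)}),\theta(f_{\sigma(1)}))_{2\pi}$, and $f^\sigma>\max\{f^{\sigma_1},f^{\sigma_{n-1}}\}\ \Rightarrow\ \theta(f^\sigma)\in(\theta(f_{\sigma(n)}),\theta(f_{\sigma(1)}))_{2\pi}$.
   Context: A linear function is $f(x)=ax+b$; monotone means $a>0$. $\vec f=(b,1-a)^\top$ and $\theta(f)\in[0,2\pi)$ is its polar angle ($\bot$ if $\vec f=0$). $(\theta_1,\theta_2)_{2\pi}=\{\theta\in(\lambda_1,\lambda_2)\mid\lambda_1-\theta_1,\lambda_2-\theta_2\in2\pi\mathbb{Z},\ \lambda_2-\lambda_1\in[0,2\pi)\}$, membership being taken modulo $2\pi$. For a permutation $\sigma$ of $[n]$, $f^\sigma=f_{\sigma(n)}\circ\cdots\circ f_{\sigma(1)}$; for $k\in\{0,\dots,n-1\}$ the $k$-shift $\sigma_k$ is defined by $\sigma_k(i)=\sigma(i+k)$ for $i\le n-k$ and $\sigma_k(i)=\sigma(i+k-n)$ for $i>n-k$, so that $f^{\sigma_k}=f_{\sigma(k)}\circ\cdots\circ f_{\sigma(1)}\circ f_{\sigma(n)}\circ\cdots\circ f_{\sigma(k+1)}$. Inequalities between functions are pointwise (for all $x$). *)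

From mathcomp Require Import all_boot all_order all_algebra all_fingroup.
From mathcomp Require Import all_classical all_reals.
From mathcomp Require Import trigo.
Set Implicit Arguments. Unset Strict Implicit. Unset Printing Implicit Defensive.
Import Order.TTheory GRing.Theory Num.Theory.
Local Open Scope ring_scope.

Section Defs.
Variable R : realType.

Definition lapp (f : R * R) (x : R) : R := f.1 * x + f.2.

Definition lcomp (g h : R * R) : R * R := (g.1 * h.1, g.1 * h.2 + g.2).

Definition monotone_lin (f : R * R) : Prop := 0 < f.1.

(* composite of a list of linear functions, the head being applied first *)
Definition lcomp_seq (s : seq (R * R)) : R * R :=
  foldl (fun acc p => lcomp p acc) (1, 0) s.

(* f^tau = f_{tau(n)} \o ... \o f_{tau(1)} (0-based indices here) *)
Definition fperm n (f : 'I_n -> R * R) (tau : 'I_n -> 'I_n) : R * R :=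
  lcomp_seq [seq f (tau i) | i <- enum 'I_n].

(* the k-shift: sigma_k(i) = sigma(i + k mod n) *)
Definition shift_ord n (k : nat) (i : 'I_n) : 'I_n :=
  Ordinal (ltn_pmod (i + k) (leq_ltn_trans (leq0n i) (ltn_ord i))).

Definition kshift n (sigma : 'I_n -> 'I_n) (k : nat) : 'I_n -> 'I_n :=
  fun i => sigma (shift_ord k i).

Definition fvec (f : R * R) : R * R := (f.2, 1 - f.1).

(* polar angle in [0, 2pi); None plays the role of "bottom" for the zero vector *)
Definition theta (f : R * R) : option R :=
  let v := fvec f in
  if (v.1 == 0) && (v.2 == 0) then None
  else Some (xget (0 : R) [set t : R | 0 <= t < pi *+ 2 /\
                   v.1 = Num.sqrt (v.1 ^+ 2 + v.2 ^+ 2) * cos t /\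
                   v.2 = Num.sqrt (v.1 ^+ 2 + v.2 ^+ 2) * sin t]).

Definition in_arc (t t1 t2 : R) : Prop :=
  exists (z1 z2 z : int),
    let l1 := t1 + z1%:~R * (pi *+ 2) in
    let l2 := t2 + z2%:~R * (pi *+ 2) in
    let l := t + z%:~R * (pi *+ 2) in
    0 <= l2 - l1 < pi *+ 2 /\ l1 < l < l2.

End Defs.

From mathcomp Require Import all_boot all_order all_algebra all_fingroup.
From mathcomp Require Import all_classical all_reals.
From mathcomp Require Import trigo.
From mathcomp Require Import ring lra zify.

(* For linear maps a, b the commutator a \o b - b \o a is a constant, namely
   cross (fvec a) (fvec b).  Splitting f^sigma = W \o f_sigma(1) with
   f^sigma_1 = f_sigma(1) \o W, and f^sigma = f_sigma(n) \o V with
   f^sigma_(n-1) = V \o f_sigma(n), the hypothesis therefore fixes the signs of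
   cross (vec f_sigma(n)) (vec f^sigma) and cross (vec f^sigma) (vec f_sigma(1)),
   i.e. of the sines of the angles from theta f_sigma(n) to theta f^sigma and
   from theta f^sigma to theta f_sigma(1).  Both positive puts theta f^sigma
   in the arc; both negative puts its antipode there. *)

Set Implicit Arguments.
Unset Strict Implicit.
Unset Printing Implicit Defensive.

Import Order.TTheory GRing.Theory Num.Theory.
Local Open Scope ring_scope.

Section PolarAngles.
Variable R : realType.

Lemma sinDz2pi (x : R) (z : int) : sin (x + z%:~R * (pi *+ 2)) = sin x.
Proof.
case: z => k; first by rewrite mulr_natl periodicn //; exact: (@sinD2pi R).
rewrite -{2}(subrK (pi *+ 2 *+ k.+1) x) (periodicn (@sinD2pi R)); congr sin.
by rewrite NegzE mulrNz mulNr -pmulrn mulr_natl.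
Qed.

Lemma mod2pi_exists (d : R) : exists z : int, 0 <= d + z%:~R * (pi *+ 2) < pi *+ 2.
Proof.
have pi2 : 0 < pi *+ 2 :> R by rewrite pmulrn_lgt0 // pi_gt0.
exists (- Num.floor (d / (pi *+ 2))).
have /andP[lo hi] := floor_itv (d / (pi *+ 2)).
rewrite ler_pdivlMr // in lo; rewrite ltr_pdivrMr // in hi.
rewrite intrD mulrDl mul1r in hi.
by rewrite mulrNz mulNr subr_ge0 lo /= ltrBlDr addrC.
Qed.

Lemma sin_gt0_mod2pi (d : R) : 0 < sin d ->
  exists z : int, 0 < d + z%:~R * (pi *+ 2) < pi.
Proof.
move=> sd; have [z hz] := mod2pi_exists d; exists z.
rewrite -(sinDz2pi d z) in sd; move: (d + _) hz sd => e /andP[e0 e2] se.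
rewrite mulr2n in e2.
have ne0 : e != 0 by apply: contraTneq se => ->; rewrite sin0 ltxx.
rewrite lt_def ne0 e0 ltNge; apply/negP => pie.
have : 0 <= sin (e - pi) by apply: sin_ge0_pi; apply/andP; split; lra.
by have := sinDpi (e - pi); rewrite subrK; lra.
Qed.

Lemma in_arc_sin (t t1 t2 : R) : 0 < sin (t - t1) -> 0 < sin (t2 - t) -> in_arc t t1 t2.
Proof.
move=> /sin_gt0_mod2pi[z /andP[a0 api]] /sin_gt0_mod2pi[z' /andP[b0 bpi]].
exists 0, (z + z'), z => /=.
rewrite mul0r addr0 intrD mulrDl.
move: a0 api b0 bpi.
set A := z%:~R * _; set B := z'%:~R * _ => *.
by repeat (apply/andP; split); lra.
Qed.

Lemma sqr_add_gt0 (x y : R) : ~~ ((x == 0) && (y == 0)) -> 0 < x ^+ 2 + y ^+ 2.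
Proof. by move=> nz; rewrite lt_def paddr_eq0 ?sqr_ge0 // !sqrf_eq0 nz addr_ge0 ?sqr_ge0. Qed.

Lemma polar_coord (x y : R) : ~~ ((x == 0) && (y == 0)) ->
  exists t, 0 <= t < pi *+ 2 /\
    x = Num.sqrt (x ^+ 2 + y ^+ 2) * cos t /\
    y = Num.sqrt (x ^+ 2 + y ^+ 2) * sin t.
Proof.
move=> nz; have pi0 := @pi_gt0 R.
set r := Num.sqrt _.
have q0 := sqr_add_gt0 nz.
have r0 : 0 < r by rewrite sqrtr_gt0.
have r2 : r ^+ 2 = x ^+ 2 + y ^+ 2 by rewrite sqr_sqrtr // ltW.
set u := x / r.
have hu : -1 <= u <= 1.
  by rewrite ler_pdivrMr // ler_pdivlMr // mul1r mulN1r; apply/andP; split; nra.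
have cu : cos (acos u) = u by apply: acosK; rewrite in_itv /= hu.
have su : sin (acos u) = `|y| / r.
  rewrite sin_acos // -(gtr0_norm r0) -normf_div -sqrtr_sqr; congr Num.sqrt.
  by rewrite /u !expr_div_n r2; field; rewrite gt_eqF.
have [a0 api] := (acos_ge0 hu, acos_lepi hu).
have [y0|y0] := leP 0 y.
  exists (acos u); split; first by apply/andP; split; lra.
  by rewrite cu su (ger0_norm y0) /u !(mulrC r) !divfK ?gt_eqF.
(* For y < 0 the angle lies in (pi, 2 pi): reflect [acos u] through the x-axis. *)
have a1 : 0 < acos u.
  apply: acos_gt0; rewrite (andP hu).1 /= lt_neqAle (andP hu).2 andbT.
  apply/eqP => u1; have xr : x = r by rewrite -[x](divfK (lt0r_neq0 r0)) -/u u1 mul1r.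
  nra.
exists (- acos u + pi *+ 2); split; first by apply/andP; split; lra.
rewrite cosD2pi sinD2pi cosN sinN cu su (ltr0_norm y0) /u !(mulrC r).
by rewrite divfK ?gt_eqF // mulNr divfK ?gt_eqF // opprK.
Qed.

Lemma theta_polar (F : R * R) : ~~ (((fvec F).1 == 0) && ((fvec F).2 == 0)) ->
  exists t, theta F = Some t /\ exists2 r, 0 < r & fvec F = (r * cos t, r * sin t).
Proof.
move=> nz; rewrite /theta (negbTE nz); eexists; split; first reflexivity.
have [_ [xE yE]] := xgetPex 0 (polar_coord nz).
exists (Num.sqrt ((fvec F).1 ^+ 2 + (fvec F).2 ^+ 2)); last first.
  by rewrite -xE -yE; case: (fvec F).
by rewrite sqrtr_gt0 sqr_add_gt0.
Qed.

Definition cross (u v : R * R) : R := u.1 * v.2 - u.2 * v.1.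

Lemma cross_polar (r s a b : R) :
  cross (r * cos a, r * sin a) (s * cos b, s * sin b) = r * s * sin (b - a).
Proof. by rewrite /cross sinB /=; ring. Qed.

Lemma theta_cross (F G : R * R) : cross (fvec F) (fvec G) != 0 ->
  exists tF tG r, [/\ theta F = Some tF, theta G = Some tG, 0 < r &
    cross (fvec F) (fvec G) = r * sin (tG - tF)].
Proof.
move=> c.
have [nzF nzG] : ~~ (((fvec F).1 == 0) && ((fvec F).2 == 0)) /\
                 ~~ (((fvec G).1 == 0) && ((fvec G).2 == 0)).
  by split; apply: contra c => /andP[/eqP a /eqP b];
     rewrite /cross a b !(mul0r, mulr0) subrr.
have [tF [thF [rF rF0 EF]]] := theta_polar nzF.
have [tG [thG [rG rG0 EG]]] := theta_polar nzG.
exists tF, tG, (rF * rG); split => //; first exact: mulr_gt0.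
by rewrite EF EG cross_polar.
Qed.

Lemma theta_in_arc (g P h : R * R) :
  0 < cross (fvec g) (fvec P) -> 0 < cross (fvec P) (fvec h) ->
  exists t t1 t2, [/\ theta P = Some t, theta g = Some t1, theta h = Some t2 &
                      in_arc t t1 t2].
Proof.
move=> gP Ph.
have [t1 [t [r [-> thP r0 E]]]] := theta_cross (lt0r_neq0 gP).
have [t' [t2 [r' [thP' -> r'0 E']]]] := theta_cross (lt0r_neq0 Ph).
move: thP' E'; rewrite thP => -[<-] E'; exists t, t1, t2; split => //.
apply: in_arc_sin.
- by rewrite -(pmulr_rgt0 _ r0) -E.
- by rewrite -(pmulr_rgt0 _ r'0) -E'.
Qed.

Lemma theta_addpi_in_arc (g P h : R * R) :
  cross (fvec g) (fvec P) < 0 -> cross (fvec P) (fvec h) < 0 ->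
  exists t t1 t2, [/\ theta P = Some t, theta g = Some t1, theta h = Some t2 &
                      in_arc (t + pi) t1 t2].
Proof.
move=> gP Ph.
have [t1 [t [r [-> thP r0 E]]]] := theta_cross (ltr0_neq0 gP).
have [t' [t2 [r' [thP' -> r'0 E']]]] := theta_cross (ltr0_neq0 Ph).
move: thP' E'; rewrite thP => -[<-] E'; exists t, t1, t2; split => //.
apply: in_arc_sin.
- by rewrite addrAC sinDpi oppr_gt0 -(pmulr_rlt0 _ r0) -E.
- by rewrite opprD addrA -[sin _]opprK -sinDpi subrK oppr_gt0 -(pmulr_rlt0 _ r'0) -E'.
Qed.

End PolarAngles.

Section Composition.
Variable R : realType.
Implicit Types (g h x : R * R) (l : seq (R * R)).

Lemma lcompA : associative (@lcomp R).
Proof. by move=> [a1 a2] [b1 b2] [c1 c2]; rewrite /lcomp /=; congr pair; ring. Qed.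

Lemma lcomp1f x : lcomp (1, 0) x = x.
Proof. by case: x => x1 x2; rewrite /lcomp /=; congr pair; ring. Qed.

Lemma lcompf1 x : lcomp x (1, 0) = x.
Proof. by case: x => x1 x2; rewrite /lcomp /=; congr pair; ring. Qed.

Lemma foldl_lcomp l x :
  foldl (fun acc p => lcomp p acc) x l = lcomp (lcomp_seq l) x.
Proof.
rewrite /lcomp_seq; elim: l x => [|a l IH] x /=; first by rewrite lcomp1f.
by rewrite IH [in RHS]IH -lcompA lcompf1.
Qed.

Lemma lcomp_seq_cons h l : lcomp_seq (h :: l) = lcomp (lcomp_seq l) h.
Proof. by rewrite {1}/lcomp_seq /= foldl_lcomp lcompf1. Qed.

Lemma lcomp_seq_rcons l g : lcomp_seq (rcons l g) = lcomp g (lcomp_seq l).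
Proof. by rewrite /lcomp_seq foldl_rcons. Qed.

Lemma map_shift_ord n k : (k <= n)%N ->
  map (@shift_ord n k) (enum 'I_n) = rot k (enum 'I_n).
Proof.
move=> kn; apply: (inj_map val_inj).
rewrite map_rot -map_comp val_enum_ord.
rewrite (eq_map (_ : _ =1 (fun j => (j + k) %% n)%N \o val)) // map_comp val_enum_ord.
rewrite /rot drop_iota take_iota add0n (minn_idPl kn).
apply: (@eq_from_nth _ 0%N); first by rewrite size_map size_cat !size_iota; lia.
rewrite size_map size_iota => i lt_in.
rewrite (nth_map 0%N) ?size_iota // nth_iota // add0n nth_cat size_iota /=.
case: ltnP => ik; first by rewrite nth_iota // modn_small //; lia.
rewrite nth_iota; last by lia.
have -> : (i + k = (i + k - n) + n)%N by lia.
by rewrite modnDr modn_small; lia.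
Qed.

Lemma fperm_kshift n (f : 'I_n -> R * R) (s : 'I_n -> 'I_n) k : (k <= n)%N ->
  fperm f (kshift s k) = lcomp_seq (rot k [seq f (s i) | i <- enum 'I_n]).
Proof.
by move=> kn; rewrite /fperm /kshift -map_rot -map_shift_ord // -map_comp.
Qed.

Lemma fperm_kshift1 n (f : 'I_n.+1 -> R * R) (s : 'I_n.+1 -> 'I_n.+1) :
  exists W, fperm f s = lcomp W (f (s ord0)) /\
            fperm f (kshift s 1) = lcomp (f (s ord0)) W.
Proof.
rewrite fperm_kshift // /fperm enum_ordSl /= rot1_cons lcomp_seq_cons lcomp_seq_rcons.
by eexists.
Qed.

Lemma fperm_kshift_last n (f : 'I_n.+1 -> R * R) (s : 'I_n.+1 -> 'I_n.+1) :
  exists V, fperm f s = lcomp (f (s ord_max)) V /\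
            fperm f (kshift s n) = lcomp V (f (s ord_max)).
Proof.
rewrite fperm_kshift //; set l := map _ _.
have -> : rot n l = rotr 1 l by rewrite /rotr size_map size_enum_ord subn1.
rewrite /fperm -/l /l enum_ordSr map_rcons rotr1_rcons.
rewrite lcomp_seq_cons lcomp_seq_rcons.
by eexists.
Qed.

End Composition.

Section Commutator.
Variable R : realType.
Implicit Types (a b : R * R).

Lemma lapp_lcompC a b x :
  lapp (lcomp a b) x - lapp (lcomp b a) x = cross (fvec a) (fvec b).
Proof. by rewrite /lapp /lcomp /cross /fvec /=; ring. Qed.

Lemma cross_fvec_lcompl a b : cross (fvec (lcomp a b)) (fvec b) = cross (fvec a) (fvec b).
Proof. by rewrite /lcomp /cross /fvec /=; ring. Qed.

Lemma cross_fvec_lcompr a b : cross (fvec a) (fvec (lcomp a b)) = a.1 * cross (fvec a) (fvec b).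
Proof. by rewrite /lcomp /cross /fvec /=; ring. Qed.

End Commutator.

Theorem mainTheorem10 (R : realType) (n : nat) (f : 'I_n.+1 -> R * R)
    (sigma : 'S_n.+1) :
  (forall i, monotone_lin (f i)) ->
  ((forall x : R,
      lapp (fperm f sigma) x <
      Num.min (lapp (fperm f (kshift sigma 1)) x) (lapp (fperm f (kshift sigma n)) x)) ->
   exists t t1 t2 : R,
     [/\ theta (fperm f sigma) = Some t,
         theta (f (sigma ord_max)) = Some t1,
         theta (f (sigma ord0)) = Some t2 &
         in_arc (t + pi) t1 t2])
  /\
  ((forall x : R,
      lapp (fperm f sigma) x >
      Num.max (lapp (fperm f (kshift sigma 1)) x) (lapp (fperm f (kshift sigma n)) x)) ->
   exists t t1 t2 : R,
     [/\ theta (fperm f sigma) = Some t,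
         theta (f (sigma ord_max)) = Some t1,
         theta (f (sigma ord0)) = Some t2 &
         in_arc t t1 t2]).
Proof.
move=> mono; set P := fperm f sigma.
set h := f (sigma ord0); set g := f (sigma ord_max).
have [W [PW Wh]] := fperm_kshift1 f sigma.
have [V [PV Vg]] := fperm_kshift_last f sigma.
have cross_Ph : cross (fvec P) (fvec h) = lapp P 0 - lapp (fperm f (kshift sigma 1)) 0.
  by rewrite /P PW Wh lapp_lcompC cross_fvec_lcompl.
have cross_gP :
    cross (fvec g) (fvec P) = g.1 * (lapp P 0 - lapp (fperm f (kshift sigma n)) 0).
  by rewrite /P PV Vg lapp_lcompC cross_fvec_lcompr.
have g_gt0 : 0 < g.1 by exact: mono.
split=> H; move: (H 0); rewrite ?lt_min ?gt_max => /andP[lt1 ltn].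
- apply: theta_addpi_in_arc.
  + by rewrite cross_gP pmulr_rlt0 // subr_lt0.
  + by rewrite cross_Ph subr_lt0.
- apply: theta_in_arc.
  + by rewrite cross_gP pmulr_rgt0 // subr_gt0.
  + by rewrite cross_Ph subr_gt0.
Qed.
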